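(* The Split Cycle VCCR satisfies Positive Involvement in Defeat: for every linear profile $\mathbf P$ and $x,y\in X(\mathbf P)$, if $(x,y)\notin sc(\mathbf P)$ and $\mathbf P'$ is obtained from $\mathbf P$ by adding one new voter whose ballot ranks $y$ above $x$, then $(x,y)\notin sc(\mathbf P')$.
   Context: Profiles: $\mathbf P:V\to\mathcal L(X)$, $V$ nonempty finite set of voters, $X=X(\mathbf P)$ nonempty finite set of candidates, $\mathcal L(X)$ strict linear orders. $\mathrm{Margin}_{\mathbf P}(x,y)$ = #voters ranking $x$ above $y$ minus #ranking $y$ above $x$. A majority path from $x_1$ to $x_n$ is $(x_1,\dots,x_n)$ with all $\mathrm{Margin}_{\mathbf P}(x_i,x_{i+1})>0$; its strength is the minimum of these margins. Split Cycle: $(x,y)\in sc(\mathbf P)$ iff $\mathrm{Margin}_{\mathbf P}(x,y)>0$ and it exceeds the strength of every majority path from $y$ to $x$. *)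

From HB Require Import structures.
From mathcomp Require Import all_boot all_order all_algebra.
Set Implicit Arguments. Unset Strict Implicit. Unset Printing Implicit Defensive.
Import Order.TTheory GRing.Theory Num.Theory.
Local Open Scope ring_scope.

(* A strict linear order on the candidate type X, as a boolean relation
   [r x y] = "x is ranked above y". *)
Definition strict_linear_order (X : finType) (r : rel X) : Prop :=
  [/\ irreflexive r, transitive r & forall x y, x != y -> r x y || r y x].

Definition profile (V X : finType) := V -> rel X.

Definition linear_profile (V X : finType) (P : profile V X) : Prop :=
  forall v, strict_linear_order (P v).

Definition margin (V X : finType) (P : profile V X) (x y : X) : int :=
  (#|[set v | P v x y]|%:Z - #|[set v | P v y x]|%:Z)%R.

Definition steps (X : Type) (x : X) (s : seq X) : seq (X * X) :=
  zip (x :: s) s.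

Definition majority_path (V X : finType) (P : profile V X) (x : X) (s : seq X)
  : bool :=
  (s != [::]) && all (fun e => 0 < margin P e.1 e.2) (steps x s).

(* Strength of the path x :: s: minimum of the margins along it
   (only meaningful when s is nonempty). *)
Definition path_strength (V X : finType) (P : profile V X) (x : X) (s : seq X)
  : int :=
  match steps x s with
  | [::] => 0
  | e :: es => foldl (fun m f => Order.min m (margin P f.1 f.2))
                     (margin P e.1 e.2) es
  end.

Definition split_cycle_defeat (V X : finType) (P : profile V X) (x y : X)
  : Prop :=
  0 < margin P x y /\
  forall s : seq X, majority_path P y s -> last y s = x ->
    path_strength P y s < margin P x y.

Definition add_voter (V X : finType) (P : profile V X) (b : rel X)
  : profile (option V) X :=
  fun v => match v with Some w => P w | None => b end.

From mathcomp Require Import all_boot all_order all_algebra.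
From mathcomp Require Import zify.
Import Order.TTheory GRing.Theory Num.Theory.
Set Implicit Arguments.
Unset Strict Implicit.
Unset Printing Implicit Defensive.

(* The new ballot lowers Margin(x,y) by exactly one, and no margin by more
   than one.  So if (x,y) is a Split Cycle defeat after the addition, then
   Margin_P(x,y) is positive, and a majority path from y to x in P of
   strength at least Margin_P(x,y) would, after the addition, still be a
   majority path, of strength at least the new Margin(x,y), which is
   impossible. *)

Lemma strict_linear_order_asym (X : finType) (r : rel X) (a c : X) :
  strict_linear_order r -> r a c -> r c a = false.
Proof.
case=> irr trans _ rac; apply/negbTE/negP => rca.
by move: (trans _ _ _ rca rac); rewrite irr.
Qed.

Lemma card_add_voter (V X : finType) (P : profile V X) (b : rel X) (a c : X) :
  #|[set v | add_voter P b v a c]| = b a c + #|[set w | P w a c]|.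
Proof.
rewrite (cardsD1 None) inE /=; congr (_ + _).
have -> : [set v | add_voter P b v a c] :\ None = Some @: [set w | P w a c].
  apply/setP => -[w|]; rewrite !inE /=.
  - by apply/idP/imsetP => [Pw|[w' + [->]]]; [exists w; rewrite ?inE | rewrite inE].
  - by apply/esym/imsetP => -[].
by rewrite card_imset //; apply: Some_inj.
Qed.

Section Margins.
Local Open Scope ring_scope.

Lemma margin_add_voter (V X : finType) (P : profile V X) (b : rel X) (a c : X) :
  margin (add_voter P b) a c = margin P a c + (b a c)%:Z - (b c a)%:Z.
Proof. by rewrite /margin !card_add_voter !PoszD; lia. Qed.

Lemma margin_add_voter_ge (V X : finType) (P : profile V X) (b : rel X) (a c : X) :
  margin P a c - 1 <= margin (add_voter P b) a c.
Proof. by rewrite margin_add_voter; case: (b a c); case: (b c a) => /=; lia. Qed.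

Lemma margin_add_voter_against (V X : finType) (P : profile V X) (b : rel X)
    (a c : X) :
  b c a -> b a c = false -> margin (add_voter P b) a c = margin P a c - 1.
Proof. by rewrite margin_add_voter => -> ->; lia. Qed.

Lemma foldl_min_ge (T : Type) (g : T -> int) (k a : int) (l : seq T) :
  (k <= foldl (fun m f => Order.min m (g f)) a l)
  = (k <= a) && all (fun z => k <= g z) l.
Proof.
elim: l a => [|z l IHl] a /=; first by rewrite andbT.
by rewrite IHl le_min andbA.
Qed.

Lemma path_strength_ge (V X : finType) (P : profile V X) (y : X) (s : seq X)
    (k : int) :
  s != [::] ->
  (k <= path_strength P y s) = all (fun e => k <= margin P e.1 e.2) (steps y s).
Proof. by case: s => [|z s] //= _; rewrite /path_strength /= foldl_min_ge. Qed.

Lemma path_strength_shift (V W X : finType) (P : profile V X) (Q : profile W X)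
    (d k : int) (y : X) (s : seq X) :
  s != [::] -> (forall a c, margin P a c - d <= margin Q a c) ->
  k + d <= path_strength P y s -> k <= path_strength Q y s.
Proof.
move=> sne PQ; rewrite !path_strength_ge // => /allP strongP.
apply/allP => -[a c] /strongP /=; have := PQ a c; lia.
Qed.

Lemma majority_path_of_strength (V X : finType) (P : profile V X) (k : int)
    (y : X) (s : seq X) :
  s != [::] -> 0 < k -> k <= path_strength P y s -> majority_path P y s.
Proof.
move=> sne k_gt0; rewrite path_strength_ge // /majority_path sne => /allP strong.
by apply/allP => e /strong; apply: lt_le_trans.
Qed.

End Margins.

Theorem proposition3p14 (V X : finType) (P : profile V X) (b : rel X) (x y : X) :
  0 < #|V| ->
  linear_profile P ->
  strict_linear_order b ->
  b y x ->
  ~ split_cycle_defeat P x y ->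
  ~ split_cycle_defeat (add_voter P b) x y.
Proof.
move=> _ _ b_slo byx not_defeat_P [margin_gt0 beats]; apply: not_defeat_P.
have margin_xy := margin_add_voter_against P byx (strict_linear_order_asym b_slo byx).
rewrite margin_xy in margin_gt0 beats.
split=> [|s /andP[sne _] last_s]; first by lia.
rewrite ltNge; apply/negP => strong.
have strong' : (margin P x y - 1 <= path_strength (add_voter P b) y s)%R.
  by apply: (path_strength_shift (d := 1%R)) => //; [exact: margin_add_voter_ge | lia].
have := beats s (majority_path_of_strength sne margin_gt0 strong') last_s.
by rewrite ltNge strong'.
Qed.
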